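(* Let $\mathcal{G}$ be a finite groupoid and let $\mathcal{H}$ and $\mathcal{K}$ be connected wide subgroupoids of $\mathcal{G}$. Then there exists an isomorphism of $\mathbb{C}$-vector spaces \[\mathbb{C}_{\mathcal{H}\backslash\mathcal{G}/\mathcal{K}}\cong \mathrm{Nat}(Y_\mathcal{H},Y_\mathcal{K}),\] where $\mathrm{Nat}(Y_\mathcal{H},Y_\mathcal{K})$ denotes the vector space of natural transformations $Y_\mathcal{H}\Rightarrow Y_\mathcal{K}$ between functors $\mathcal{G}\to\mathbf{Vect}_\mathbb{C}$.
   Context: A groupoid is a category in which every morphism is invertible; all groupoids are finite and nonempty; $\mathcal{C}_0,\mathcal{C}_1$ denote objects and morphisms, and $gg'$ denotes composition $g\circ g'$. A subgroupoid is a subcategory that is a groupoid; it is wide if it contains all objects, connected if any two of its objects are joined by a morphism of it. Define \[\mathbb{C}_{\mathcal{H}\backslash\mathcal{G}/\mathcal{K}}:=\{\phi:\mathcal{G}_1\to\mathbb{C}\mid \phi(h^{-1}gk)=\phi(g)\text{ for all }h\in\mathcal{H}_1,g\in\mathcal{G}_1,k\in\mathcal{K}_1\text{ with }\mathrm{cod}\,h=\mathrm{cod}\,g,\ \mathrm{dom}\,g=\mathrm{cod}\,k\},\] a vector space under pointwise operations. For an object $G$ let $\mathrm{Mor}_\mathcal{G}(-,G):=\coprod_{G'\in\mathcal{G}_0}\mathcal{G}(G',G)$. For a subgroupoid $\mathcal{H}$, the functor $Y_\mathcal{H}:\mathcal{G}\to\mathbf{Vect}_\mathbb{C}$ is given on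 objects by $Y_\mathcal{H}(G):=\{f:\mathrm{Mor}_\mathcal{G}(-,G)\to\mathbb{C}\mid f(gh)=f(g)\text{ for all } g\in\mathrm{Mor}_\mathcal{G}(-,G),\ h\in\mathcal{H}_1 \text{ with } \mathrm{dom}\,g=\mathrm{cod}\,h\}$ (pointwise vector space structure), and on a morphism $g:G\to G'$ by $Y_\mathcal{H}(g)(f):=f(g^{-1}\,-)$, i.e. $x\mapsto f(g^{-1}x)$ for $x\in\mathrm{Mor}_\mathcal{G}(-,G')$. *)

From mathcomp Require Import all_boot all_algebra.
From mathcomp Require Import reals complex.
Set Implicit Arguments.
Unset Strict Implicit.
Unset Printing Implicit Defensive.
Import GRing.Theory.
Local Open Scope ring_scope.

(* A finite groupoid: finite types of objects and morphisms, domain and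
   codomain maps, identities, composition [comp g g'] = g o g' (meaningful
   when dom g = cod g') and inverses, with the groupoid axioms. *)
Record groupoid := Groupoid {
  obj : finType;
  mor : finType;
  dom : mor -> obj;
  cod : mor -> obj;
  gid : obj -> mor;
  comp : mor -> mor -> mor;
  inv : mor -> mor;
  dom_id : forall x, dom (gid x) = x;
  cod_id : forall x, cod (gid x) = x;
  dom_comp : forall g g', dom g = cod g' -> dom (comp g g') = dom g';
  cod_comp : forall g g', dom g = cod g' -> cod (comp g g') = cod g;
  compA : forall g g' g'', dom g = cod g' -> dom g' = cod g'' ->
    comp g (comp g' g'') = comp (comp g g') g'';
  comp_idl : forall g, comp (gid (cod g)) g = g;
  comp_idr : forall g, comp g (gid (dom g)) = g;
  dom_inv : forall g, dom (inv g) = cod g;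
  cod_inv : forall g, cod (inv g) = dom g;
  comp_invr : forall g, comp g (inv g) = gid (cod g);
  comp_invl : forall g, comp (inv g) g = gid (dom g)
}.

Section Defs.
Variable G : groupoid.
Local Notation O := (obj G).
Local Notation M := (mor G).
Local Notation dom := (@dom G).
Local Notation cod := (@cod G).
Local Notation comp := (@comp G).
Local Notation inv := (@inv G).
Local Notation gid := (@gid G).

(* A wide subgroupoid, given by its set of morphisms: it contains every
   identity (hence all objects), and is closed under composition of
   composable morphisms and under inverses. *)
Definition wide_subgroupoid (H : {pred M}) : Prop :=
  [/\ forall x : O, gid x \in H,
      forall h h', h \in H -> h' \in H -> dom h = cod h' -> comp h h' \in H
    & forall h, h \in H -> inv h \in H].

Definition connected_sub (H : {pred M}) : Prop :=
  forall x y : O, exists h, [/\ h \in H, dom h = x & cod h = y].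

Variable C : fieldType.

Definition double_coset_fun (H K : {pred M}) (phi : M -> C) : Prop :=
  forall h g k, h \in H -> k \in K -> cod h = cod g -> dom g = cod k ->
    phi (comp (comp (inv h) g) k) = phi g.

(* An element of Y_H(x) is a function Mor(-,x) -> C; we represent it by a
   function M -> C of which only the values on morphisms with codomain x
   matter.  [eqOn x f f'] is equality as elements of C^{Mor(-,x)}. *)
Definition eqOn (x : O) (f f' : M -> C) : Prop :=
  forall g, cod g = x -> f g = f' g.

Definition inY (H : {pred M}) (x : O) (f : M -> C) : Prop :=
  forall g h, cod g = x -> h \in H -> dom g = cod h -> f (comp g h) = f g.

(* Y_H(g)(f) := f(g^{-1} -), for g : x -> x' (same formula for every H). *)
Definition Ymap (g : M) (f : M -> C) : M -> C := fun y => f (comp (inv g) y).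

(* eta : forall x, Y_H(x) -> Y_K(x) is a natural transformation Y_H => Y_K:
   each component is a well-defined C-linear map Y_H(x) -> Y_K(x), and
   the naturality squares commute. *)
Definition is_nat_trans (H K : {pred M}) (eta : O -> (M -> C) -> (M -> C))
  : Prop :=
  [/\ (forall x f, inY H x f -> inY K x (eta x f)),
      (forall x f f', inY H x f -> inY H x f' -> eqOn x f f' ->
         eqOn x (eta x f) (eta x f')),
      (forall x (a : C) f f', inY H x f -> inY H x f' ->
         eqOn x (eta x (fun y => a * f y + f' y))
                (fun y => a * eta x f y + eta x f' y))
    & (forall g f, inY H (dom g) f ->
         eqOn (cod g) (eta (cod g) (Ymap g f)) (Ymap g (eta (dom g) f)))].

Definition nat_eq (H : {pred M}) (eta eta' : O -> (M -> C) -> (M -> C))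
  : Prop :=
  forall x f, inY H x f -> eqOn x (eta x f) (eta' x f).

Definition dc_nat_iso (H K : {pred M}) : Prop :=
  exists Phi : (M -> C) -> O -> (M -> C) -> (M -> C),
  [/\ (forall phi, double_coset_fun H K phi -> is_nat_trans H K (Phi phi)),
      (forall (a : C) phi psi, double_coset_fun H K phi ->
         double_coset_fun H K psi ->
         nat_eq H (Phi (fun g => a * phi g + psi g))
                  (fun x f y => a * Phi phi x f y + Phi psi x f y)),
      (forall phi psi, double_coset_fun H K phi -> double_coset_fun H K psi ->
         nat_eq H (Phi phi) (Phi psi) -> phi = psi)
    & (forall eta, is_nat_trans H K eta ->
         exists2 phi, double_coset_fun H K phi & nat_eq H (Phi phi) eta)].
End Defs.

(* The map phi |-> (f |-> sum_{cod g = x} f(g) phi(g^-1 -)) sends C_{H\G/K} to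
   natural transformations Y_H => Y_K.  It is an isomorphism because Y_H(x) is
   spanned by the translates of the indicator 1_H of H: every f in Y_H(x) equals
   N^-1 sum_{cod g = x} f(g) Y_H(g)(1_H), where N is the number of morphisms
   of H with codomain x.  Since H is wide and connected, N is a nonzero constant
   (here characteristic 0 is used), so a natural transformation eta is
   determined by eta(1_H), and z |-> N^-1 eta_{cod z}(1_H)(z) is the double
   coset function it comes from. *)
From Pilot Require Import Defs.
From mathcomp Require Import all_boot all_algebra.
From mathcomp Require Import reals complex.
From Stdlib Require Import FunctionalExtensionality.
Set Implicit Arguments.
Unset Strict Implicit.
Unset Printing Implicit Defensive.
Import GRing.Theory Num.Theory.
Local Open Scope ring_scope.

Local Notation comp := Defs.comp.
Local Notation inv := Defs.inv.
Local Notation dom := Defs.dom.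
Local Notation cod := Defs.cod.
Local Notation gid := Defs.gid.

Section GroupoidTheory.
Variable G : groupoid.
Implicit Types (g h w y z : mor G) (x : obj G).

Lemma compKg g y : dom g = cod y -> comp (inv g) (comp g y) = y.
Proof.
by move=> e; rewrite (Defs.compA (dom_inv g) e) comp_invl e comp_idl.
Qed.

Lemma compVKg g y : cod g = cod y -> comp g (comp (inv g) y) = y.
Proof.
move=> e; rewrite (Defs.compA (esym (cod_inv g))); last by rewrite dom_inv e.
by rewrite comp_invr e comp_idl.
Qed.

Lemma compgK g h : dom g = cod h -> comp (comp g h) (inv h) = g.
Proof.
move=> e; rewrite -(Defs.compA e); last by rewrite cod_inv.
by rewrite comp_invr -e comp_idr.
Qed.

Lemma inv_unique w g : dom w = cod g -> comp w g = gid (dom g) -> w = inv g.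
Proof.
move=> e wg; rewrite -(comp_idr w) e -comp_invr (Defs.compA e); last first.
  by rewrite cod_inv.
by rewrite wg -(cod_inv g) comp_idl.
Qed.

Lemma invK g : inv (inv g) = g.
Proof. by apply/esym/inv_unique; rewrite ?cod_inv // comp_invr dom_inv. Qed.

Lemma inv_gid x : inv (gid x) = gid x.
Proof.
apply/esym/inv_unique; first by rewrite dom_id cod_id.
by rewrite -{1}(cod_id x) comp_idl dom_id.
Qed.

Lemma inv_comp g h : dom g = cod h -> inv (comp g h) = comp (inv h) (inv g).
Proof.
move=> e; apply/esym/inv_unique.
  by rewrite dom_comp ?dom_inv ?cod_inv ?cod_comp.
rewrite -Defs.compA ?dom_inv ?cod_comp ?dom_comp ?cod_inv //.
by rewrite compKg // comp_invl.
Qed.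

Lemma big_cod_comp (R : Type) (idx : R) (op : Monoid.com_law idx) g0
    (F : mor G -> R) :
  \big[op/idx]_(g | cod g == cod g0) F g =
  \big[op/idx]_(g | cod g == dom g0) F (comp g0 g).
Proof.
rewrite (reindex_onto (comp g0) (comp (inv g0))) => [|g /eqP eg]; last first.
  by rewrite compVKg.
apply: eq_bigl => g; have [eg|neg] := eqVneq (cod g) (dom g0).
  by rewrite cod_comp // eqxx compKg // eqxx.
apply/negbTE; apply: contra neg => /andP[/eqP e /eqP <-].
by rewrite cod_comp ?cod_inv // dom_inv e.
Qed.

Lemma card_cod_comp g0 (P : pred (mor G)) :
  #|[pred g | (cod g == cod g0) && P g]| =
  #|[pred g | (cod g == dom g0) && P (comp g0 g)]|.
Proof. by rewrite -!sum1_card !big_mkcondr /= big_cod_comp. Qed.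

End GroupoidTheory.

Section WideSubgroupoid.
Variables (G : groupoid) (H : {pred mor G}).
Hypothesis wH : wide_subgroupoid H.
Implicit Types (g h z : mor G) (x : obj G).

Lemma mem_gid x : gid x \in H.
Proof. by case: wH. Qed.

Lemma mem_inv h : (inv h \in H) = (h \in H).
Proof. by case: wH => _ _ Hinv; apply/idP/idP => /Hinv; rewrite ?invK. Qed.

Lemma mem_compl h z : h \in H -> dom h = cod z -> (comp h z \in H) = (z \in H).
Proof.
case: wH => _ Hcomp Hinv hH e; apply/idP/idP => [hzH|zH]; last exact: Hcomp.
by rewrite -(compKg e) Hcomp ?Hinv // dom_inv cod_comp.
Qed.

Lemma mem_compr g h : h \in H -> dom g = cod h -> (comp g h \in H) = (g \in H).
Proof.
case: wH => _ Hcomp Hinv hH e; apply/idP/idP => [ghH|gH]; last exact: Hcomp.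
by rewrite -(compgK e) Hcomp ?Hinv // dom_comp // cod_inv.
Qed.

Definition ncod x : nat := #|[pred h | (cod h == x) && (h \in H)]|.

Lemma ncod_gt0 x : (0 < ncod x)%N.
Proof.
by apply/card_gt0P; exists (gid x); rewrite inE /= cod_id eqxx mem_gid.
Qed.

Lemma ncod_dom h : h \in H -> ncod (dom h) = ncod (cod h).
Proof.
move=> hH; rewrite /ncod card_cod_comp; apply: eq_card => g /=.
by rewrite !inE; case: (eqVneq (cod g) (dom h)) => //= e; rewrite mem_compl.
Qed.

Lemma ncod_const : connected_sub H -> forall x x', ncod x = ncod x'.
Proof. by move=> cH x x'; have [h [hH <- <-]] := cH x x'; apply: ncod_dom. Qed.

Lemma card_coset z :
  #|[pred g | (cod g == cod z) && (comp (inv g) z \in H)]| = ncod (dom z).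
Proof.
rewrite /ncod -(cod_inv z) [RHS]card_cod_comp dom_inv.
apply: eq_card => g; rewrite !inE; case: (eqVneq (cod g) (cod z)) => //= e.
by rewrite -mem_inv inv_comp ?invK // dom_inv e.
Qed.

End WideSubgroupoid.

Section Translates.
Variables (G : groupoid) (C : fieldType) (H : {pred mor G}).
Implicit Types (g h z : mor G) (x : obj G).

Definition indicator : mor G -> C := fun g => if g \in H then 1 else 0.

Lemma inY_sum x (I : Type) (r : seq I) (P : pred I) (c : I -> C)
    (u : I -> mor G -> C) :
  (forall i, P i -> inY H x (u i)) ->
  inY H x (fun z => \sum_(i <- r | P i) c i * u i z).
Proof. by move=> uY g h eg hH e; apply: eq_bigr => i Pi; rewrite uY. Qed.

Hypothesis wH : wide_subgroupoid H.

Lemma ind_inY {x} : inY H x indicator.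
Proof. by move=> g h _ hH e; rewrite /indicator mem_compr. Qed.

Lemma Ymap_indicator h : h \in H -> eqOn (cod h) (Ymap h indicator) indicator.
Proof.
by move=> hH z ez; rewrite /Ymap /indicator mem_compl ?mem_inv ?dom_inv.
Qed.

Lemma Ymap_ind_inY g : inY H (cod g) (Ymap g indicator).
Proof.
move=> z h ez hH e; rewrite /Ymap Defs.compA ?dom_inv ?ez //.
by rewrite /indicator mem_compr // dom_comp // dom_inv ez.
Qed.

Hypothesis C_char0 : has_pchar0 C.

Lemma ncod_neq0 x : (ncod H x)%:R != 0 :> C.
Proof. by rewrite (pcharf0P C).1 // -lt0n ncod_gt0. Qed.

Hypothesis cH : connected_sub H.

Lemma inY_span_indicator x f : inY H x f ->
  eqOn x (fun z =>
    \sum_(g | cod g == x) f g / (ncod H x)%:R * Ymap g indicator z) f.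
Proof.
move=> fY z ez; have fgz g : cod g = x -> comp (inv g) z \in H -> f g = f z.
  move=> eg gzH; have zE : z = comp g (comp (inv g) z).
    by rewrite compVKg // eg ez.
  by rewrite zE fY // cod_comp ?cod_inv // dom_inv eg ez.
rewrite (eq_bigr (fun g =>
    if comp (inv g) z \in H then f z / (ncod H x)%:R else 0)).
  rewrite -big_mkcondr.
  rewrite (sumr_const [pred g | (cod g == x) && (comp (inv g) z \in H)]).
  rewrite -ez card_coset // (ncod_const wH cH (dom z) (cod z)).
  by rewrite -(mulr_natr (f z / _)) mulfVK // ncod_neq0.
move=> g /eqP eg; rewrite /Ymap /indicator.
by case: ifP => [gzH|_]; rewrite ?mulr0 // mulr1 fgz.
Qed.

End Translates.

Section NatTrans.
Variables (G : groupoid) (C : fieldType) (H K : {pred mor G}).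
Variable eta : obj G -> (mor G -> C) -> mor G -> C.
Hypothesis etaN : is_nat_trans H K eta.
Implicit Types (g h z : mor G) (x : obj G).

Lemma nat_trans0 x : eqOn x (eta x (fun=> 0)) (fun=> 0).
Proof.
case: etaN => _ _ etaL _ z ez.
have inY0 : inY H x (fun=> (0 : C)) by [].
have := etaL x 1 _ _ inY0 inY0 z ez.
have -> : (fun=> 1 * 0 + 0) = (fun=> 0) :> (mor G -> C).
  by apply: functional_extensionality => _; rewrite mul1r addr0.
by rewrite mul1r => /esym/eqP; rewrite -subr_eq0 addrK => /eqP.
Qed.

Lemma nat_trans_sum x (I : Type) (r : seq I) (P : pred I) (c : I -> C)
    (u : I -> mor G -> C) :
  (forall i, P i -> inY H x (u i)) ->
  eqOn x (eta x (fun z => \sum_(i <- r | P i) c i * u i z))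
         (fun z => \sum_(i <- r | P i) c i * eta x (u i) z).
Proof.
case: etaN => _ _ etaL _ uY; elim: r => [|i r IH] z ez.
  have -> : (fun z => \sum_(i <- [::] | P i) c i * u i z) = fun=> 0.
    by apply: functional_extensionality => ?; rewrite big_nil.
  by rewrite big_nil nat_trans0.
rewrite big_cons; case: ifP => Pi; last first.
  have -> : (fun z => \sum_(j <- i :: r | P j) c j * u j z) =
      fun z => \sum_(j <- r | P j) c j * u j z.
    by apply: functional_extensionality => ?; rewrite big_cons Pi.
  exact: IH.
have -> : (fun z => \sum_(j <- i :: r | P j) c j * u j z) =
    fun z => c i * u i z + \sum_(j <- r | P j) c j * u j z.
  by apply: functional_extensionality => ?; rewrite big_cons Pi.
by rewrite etaL //= ?IH //; [exact: uY | exact: inY_sum].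
Qed.

Hypothesis wH : wide_subgroupoid H.

Lemma nat_trans_ind_compVl h g : h \in H -> cod g = cod h ->
  eta (dom h) (indicator C H) (comp (inv h) g) = eta (cod h) (indicator C H) g.
Proof.
case: etaN => _ etaW _ etaNat hH eg.
have indE : eqOn (dom h) (indicator C H) (Ymap (inv h) (indicator C H)).
  by move=> z ez; rewrite Ymap_indicator ?mem_inv ?cod_inv.
have indY : inY H (dom h) (Ymap (inv h) (indicator C H)).
  by rewrite -(cod_inv h); apply: Ymap_ind_inY.
have ecod : cod (comp (inv h) g) = dom h by rewrite cod_comp ?cod_inv ?dom_inv.
rewrite (etaW _ _ _ (ind_inY C wH) indY indE _ ecod).
have := etaNat (inv h) (indicator C H); rewrite cod_inv dom_inv => etaNat_h.
by rewrite (etaNat_h (ind_inY C wH) _ ecod) /Ymap invK compVKg.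
Qed.

End NatTrans.

Section DoubleCosetNat.
Variables (G : groupoid) (C : fieldType) (H K : {pred mor G}).
Implicit Types (phi psi : mor G -> C) (g h k w y z : mor G) (x : obj G).

Definition nat_of_dc phi x (f : mor G -> C) : mor G -> C :=
  fun y => \sum_(g | cod g == x) f g * phi (comp (inv g) y).

Definition dc_of_nat (eta : obj G -> (mor G -> C) -> mor G -> C) z : C :=
  eta (cod z) (indicator C H) z / (ncod H (cod z))%:R.

Lemma nat_of_dc_linear a phi psi :
  nat_eq H (nat_of_dc (fun g => a * phi g + psi g))
           (fun x f y => a * nat_of_dc phi x f y + nat_of_dc psi x f y).
Proof.
move=> x f _ y _; rewrite /nat_of_dc mulr_sumr -big_split.
by apply: eq_bigr => g _; rewrite mulrDr mulrCA.
Qed.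

Hypotheses (wH : wide_subgroupoid H) (wK : wide_subgroupoid K).

Lemma dc_fun_compr phi w k : double_coset_fun H K phi ->
  k \in K -> dom w = cod k -> phi (comp w k) = phi w.
Proof.
move=> phiD kK e.
have := phiD _ w k (mem_gid wH (cod w)) kK (cod_id _) e.
by rewrite inv_gid comp_idl.
Qed.

Lemma dc_fun_compVl phi h w : double_coset_fun H K phi ->
  h \in H -> cod h = cod w -> phi (comp (inv h) w) = phi w.
Proof.
move=> phiD hH e.
have := phiD h w _ hH (mem_gid wK (dom w)) e (esym (cod_id _)).
by rewrite -{1}(dom_comp (g := inv h) (g' := w)) ?dom_inv // comp_idr.
Qed.

Lemma nat_of_dc_nat_trans phi : double_coset_fun H K phi ->
  is_nat_trans H K (nat_of_dc phi).
Proof.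
move=> phiD; split.
- move=> x f _ y k ey kK e; apply: eq_bigr => g /eqP eg; congr (_ * _).
  rewrite Defs.compA ?dom_inv ?eg ?ey // (dc_fun_compr phiD) //.
  by rewrite dom_comp // dom_inv eg ey.
- by move=> x f f' _ _ ff' y ey; apply: eq_bigr => g /eqP eg; rewrite ff'.
- move=> x a f f' _ _ y _; rewrite /nat_of_dc mulr_sumr -big_split.
  by apply: eq_bigr => g _; rewrite mulrDl mulrA.
- move=> g0 f _ y ey; rewrite /nat_of_dc /Ymap big_cod_comp.
  apply: eq_bigr => g /eqP eg; rewrite compKg // inv_comp //.
  by rewrite Defs.compA ?dom_inv ?cod_inv.
Qed.

Lemma nat_of_dc_indicator phi x y : double_coset_fun H K phi -> cod y = x ->
  nat_of_dc phi x (indicator C H) y = (ncod H x)%:R * phi y.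
Proof.
move=> phiD ey; rewrite /nat_of_dc /ncod mulr_natl -sumr_const.
rewrite big_mkcond [RHS]big_mkcond; apply: eq_bigr => g _.
rewrite inE /indicator.
case: eqP => //= eg; case: ifP => gH; rewrite ?mul0r // mul1r.
by rewrite (dc_fun_compVl phiD) // eg.
Qed.

Lemma dc_of_nat_dc eta :
  is_nat_trans H K eta -> double_coset_fun H K (dc_of_nat eta).
Proof.
move=> etaN h g k hH kK ehg egk; case: (etaN) => etaY _ _ _.
set w := comp (inv h) g.
have cw : cod w = dom h by rewrite cod_comp ?cod_inv // dom_inv.
have dw : dom w = cod k by rewrite dom_comp ?dom_inv.
rewrite /dc_of_nat cod_comp // cw (etaY _ _ (ind_inY C wH) w k cw kK dw).
by rewrite (nat_trans_ind_compVl etaN wH hH) // (ncod_dom wH hH) ehg.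
Qed.

Hypothesis C_char0 : has_pchar0 C.

Lemma nat_of_dc_inj phi psi :
  double_coset_fun H K phi -> double_coset_fun H K psi ->
  nat_eq H (nat_of_dc phi) (nat_of_dc psi) -> phi = psi.
Proof.
move=> phiD psiD E; apply: functional_extensionality => y.
have := E (cod y) (indicator C H) (ind_inY C wH) y erefl.
by rewrite !nat_of_dc_indicator //; apply/mulfI/ncod_neq0.
Qed.

Hypothesis cH : connected_sub H.

Lemma dc_of_natK eta : is_nat_trans H K eta ->
  nat_eq H (nat_of_dc (dc_of_nat eta)) eta.
Proof.
move=> etaN x f fY y ey; case: (etaN) => _ etaW _ etaNat.
have uY g : cod g == x -> inY H x (Ymap g (indicator C H)).
  by move=> /eqP <-; apply: Ymap_ind_inY.
have termE g : cod g == x -> f g * dc_of_nat eta (comp (inv g) y) =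
    f g / (ncod H x)%:R * eta x (Ymap g (indicator C H)) y.
  move=> /eqP eg; have cgy : cod (comp (inv g) y) = dom g.
    by rewrite cod_comp ?cod_inv // dom_inv eg ey.
  rewrite /dc_of_nat cgy (ncod_const wH cH (dom g) x) -eg.
  by rewrite (etaNat g _ (ind_inY C wH)) ?eg // /Ymap mulrA mulrAC.
rewrite /nat_of_dc (eq_bigr _ termE) -(nat_trans_sum etaN _ _ uY ey).
apply: (etaW x _ f _ fY _ y ey); first exact: inY_sum.
exact: inY_span_indicator.
Qed.

End DoubleCosetNat.

Lemma dc_nat_iso_connected (G : groupoid) (C : fieldType) (H K : {pred mor G}) :
  has_pchar0 C -> wide_subgroupoid H -> connected_sub H -> wide_subgroupoid K ->
  dc_nat_iso C H K.
Proof.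
move=> C_char0 wH cH wK; exists (@nat_of_dc G C); split.
- by move=> phi; apply: nat_of_dc_nat_trans.
- by move=> a phi psi _ _; apply: nat_of_dc_linear.
- exact: nat_of_dc_inj.
- move=> eta etaN; exists (dc_of_nat H eta); first exact: dc_of_nat_dc.
  exact: (dc_of_natK wH C_char0 cH etaN).
Qed.

Theorem theorem5p4 (R : realType) (G : groupoid) (H K : {pred mor G}) :
  (0 < #|obj G|)%N ->
  wide_subgroupoid H -> connected_sub H ->
  wide_subgroupoid K -> connected_sub K ->
  dc_nat_iso (R[i]) H K.
Proof.
by move=> _ wH cH wK _; apply: dc_nat_iso_connected (pchar_num _) wH cH wK.
Qed.
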